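(* Let $(\mathfrak{g},\omega)$ be a $2n$-dimensional real irreducible symplectic Lie algebra. For $\alpha\in\mathfrak{g}^*$ let $\omega_\alpha=\omega+d\alpha$. If $\omega_\alpha$ is non-degenerate, then $(\mathfrak{g},\omega_\alpha)$ is a $2n$-dimensional irreducible symplectic Lie algebra.
   Context: A symplectic Lie algebra is a real Lie algebra with a non-degenerate 2-form $\omega$ satisfying $\omega([x,y],z)+\omega([y,z],x)+\omega([z,x],y)=0$; it is irreducible if it has no nonzero ideal $\mathfrak{j}$ with $\omega(\mathfrak{j},\mathfrak{j})=0$. $d\alpha(x,y)=-\alpha([x,y])$. *)

(* A real Lie algebra of dimension m is modelled on the
   real vector space 'rV[R]_m (R : realType), with the bracket as a function. *)
From HB Require Import structures.
From mathcomp Require Import all_boot all_order all_algebra.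
From mathcomp Require Import reals.
Set Implicit Arguments. Unset Strict Implicit. Unset Printing Implicit Defensive.
Import Order.TTheory GRing.Theory Num.Theory.
Local Open Scope ring_scope.

Section Defs.
Variables (R : realType) (m : nat).
Local Notation V := 'rV[R]_m.

Definition is_lie_bracket (br : V -> V -> V) : Prop :=
  [/\ (forall (a : R) (x y z : V), br (a *: x + y) z = a *: br x z + br y z),
      (forall (a : R) (x y z : V), br x (a *: y + z) = a *: br x y + br x z),
      (forall x : V, br x x = 0) &
      (forall x y z : V, br x (br y z) + br y (br z x) + br z (br x y) = 0)].

Definition is_linear_form (alpha : V -> R) : Prop :=
  forall (a : R) (x y : V), alpha (a *: x + y) = a * alpha x + alpha y.

Definition is_two_form (w : V -> V -> R) : Prop :=
  [/\ (forall (a : R) (x y z : V), w (a *: x + y) z = a * w x z + w y z),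
      (forall (a : R) (x y z : V), w x (a *: y + z) = a * w x y + w x z) &
      (forall x : V, w x x = 0)].

Definition nondegenerate_form (w : V -> V -> R) : Prop :=
  forall x : V, (forall y : V, w x y = 0) -> x = 0.

Definition is_closed_form (br : V -> V -> V) (w : V -> V -> R) : Prop :=
  forall x y z : V, w (br x y) z + w (br y z) x + w (br z x) y = 0.

Definition symplectic_lie (br : V -> V -> V) (w : V -> V -> R) : Prop :=
  [/\ is_lie_bracket br, is_two_form w, nondegenerate_form w & is_closed_form br w].

Definition is_ideal (br : V -> V -> V) (J : V -> Prop) : Prop :=
  [/\ J 0,
      (forall (a : R) (x y : V), J x -> J y -> J (a *: x + y)) &
      (forall x y : V, J y -> J (br x y))].

Definition irreducible_symplectic_lie (br : V -> V -> V) (w : V -> V -> R) : Prop :=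
  symplectic_lie br w /\
  ~ (exists J : V -> Prop,
       [/\ is_ideal br J, (exists x, J x /\ x <> 0) &
           (forall x y, J x -> J y -> w x y = 0)]).

Definition dform (br : V -> V -> V) (alpha : V -> R) : V -> V -> R :=
  fun x y => - alpha (br x y).

Definition omega_shift (br : V -> V -> V) (w : V -> V -> R) (alpha : V -> R)
  : V -> V -> R := fun x y => w x y + dform br alpha x y.

End Defs.

(** If an ideal [J] is isotropic for the closed non-degenerate form [w],
    then the cocycle identity [w([x,y],z) = - w([y,z],x) - w([z,x],y)] and
    the fact that [[y,z]] and [[z,x]] lie in [J] give [w([x,y], _) = 0],
    so [J] is abelian.
    The exact form [d alpha] is closed by the Jacobi identity and vanishes on an
    abelian ideal, so an ideal isotropic for [w + d alpha] is isotropic for [w];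
    irreducibility of [w] thus transfers to [w + d alpha]. *)
From mathcomp Require Import all_boot all_order all_algebra.
From mathcomp Require Import reals.
Set Implicit Arguments. Unset Strict Implicit. Unset Printing Implicit Defensive.
Import GRing.Theory.
Local Open Scope ring_scope.

Section SymplecticShift.
Variables (R : realType) (m : nat).
Local Notation V := 'rV[R]_m.

Definition isotropic (w : V -> V -> R) (J : V -> Prop) : Prop :=
  forall x y, J x -> J y -> w x y = 0.

Section LinearForm.
Variable alpha : V -> R.
Hypothesis alpha_lin : is_linear_form alpha.

Lemma linear_formD x y : alpha (x + y) = alpha x + alpha y.
Proof. by have := alpha_lin 1 x y; rewrite scale1r mul1r. Qed.

Lemma linear_form0 : alpha 0 = 0.
Proof. by apply: (@addrI _ (alpha 0)); rewrite -linear_formD !addr0. Qed.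

End LinearForm.

Section LieBracket.
Variable br : V -> V -> V.
Hypothesis br_lie : is_lie_bracket br.

Lemma bracketDl x y z : br (x + y) z = br x z + br y z.
Proof. by case: br_lie => brl _ _ _; have := brl 1 x y z; rewrite !scale1r. Qed.

Lemma bracketDr x y z : br x (y + z) = br x y + br x z.
Proof. by case: br_lie => _ brr _ _; have := brr 1 x y z; rewrite !scale1r. Qed.

Lemma bracket_anticomm x y : br y x = - br x y.
Proof.
case: br_lie => _ _ brxx _.
have := brxx (x + y); rewrite bracketDl !bracketDr !brxx add0r addr0.
by move/eqP; rewrite addr_eq0 => /eqP ->; rewrite opprK.
Qed.

Lemma jacobi_left x y z : br (br x y) z + br (br y z) x + br (br z x) y = 0.
Proof.
case: br_lie => _ _ _ jacobi.
rewrite (bracket_anticomm z) (bracket_anticomm x (br y z)).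
rewrite (bracket_anticomm y (br z x)).
by rewrite -!opprD (addrC (br z _)) -addrA (addrC (br z _)) addrA jacobi oppr0.
Qed.

Lemma ideal_bracket_l J x y : is_ideal br J -> J x -> J (br x y).
Proof.
move=> [J0 Jlin Jbr] Jx; rewrite bracket_anticomm -scaleN1r -[_ *: _]addr0.
exact: Jlin (Jbr _ _ Jx) J0.
Qed.

Section ExactForm.
Variable alpha : V -> R.
Hypothesis alpha_lin : is_linear_form alpha.

Lemma dform_two_form : is_two_form (dform br alpha).
Proof.
case: br_lie => brl brr brxx _; split=> [a x y z | a x y z | x].
- by rewrite /dform brl alpha_lin opprD mulrN.
- by rewrite /dform brr alpha_lin opprD mulrN.
- by rewrite /dform brxx (linear_form0 alpha_lin) oppr0.
Qed.

Lemma dform_closed : is_closed_form br (dform br alpha).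
Proof.
move=> x y z; rewrite /dform -!opprD -!(linear_formD alpha_lin).
by rewrite jacobi_left (linear_form0 alpha_lin) oppr0.
Qed.

Lemma dform_commuting x y : br x y = 0 -> dform br alpha x y = 0.
Proof. by move=> brxy; rewrite /dform brxy (linear_form0 alpha_lin) oppr0. Qed.

End ExactForm.

Lemma isotropic_ideal_abelian (w : V -> V -> R) (J : V -> Prop) x y :
  is_closed_form br w -> nondegenerate_form w -> is_ideal br J ->
  isotropic w J -> J x -> J y -> br x y = 0.
Proof.
move=> wcl wnd Jideal Jiso Jx Jy; apply: wnd => z.
have Jyz : J (br y z) by exact: ideal_bracket_l.
have Jzx : J (br z x) by case: Jideal => _ _; apply.
by have := wcl x y z; rewrite (Jiso _ _ Jyz Jx) (Jiso _ _ Jzx Jy) !addr0.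
Qed.

End LieBracket.

Lemma two_formD (w1 w2 : V -> V -> R) :
  is_two_form w1 -> is_two_form w2 -> is_two_form (fun x y => w1 x y + w2 x y).
Proof.
case=> w1l w1r w1xx [w2l w2r w2xx]; split=> [a x y z | a x y z | x].
- by rewrite w1l w2l mulrDr addrACA.
- by rewrite w1r w2r mulrDr addrACA.
- by rewrite w1xx w2xx addr0.
Qed.

Lemma closed_formD (br : V -> V -> V) (w1 w2 : V -> V -> R) :
  is_closed_form br w1 -> is_closed_form br w2 ->
  is_closed_form br (fun x y => w1 x y + w2 x y).
Proof.
move=> w1_closed w2_closed x y z.
by rewrite [X in X + _]addrACA [X in X = 0]addrACA w1_closed w2_closed addr0.
Qed.

Lemma omega_shift_symplectic
    (br : V -> V -> V) (w : V -> V -> R) (alpha : V -> R) :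
  symplectic_lie br w -> is_linear_form alpha ->
  nondegenerate_form (omega_shift br w alpha) ->
  symplectic_lie br (omega_shift br w alpha).
Proof.
move=> [br_lie w_two_form _ w_closed] alpha_lin shift_nd; split=> //.
- exact: two_formD w_two_form (dform_two_form br_lie alpha_lin).
- exact: closed_formD w_closed (dform_closed br_lie alpha_lin).
Qed.

Lemma omega_shift_isotropic_ideal
    (br : V -> V -> V) (w : V -> V -> R) (alpha : V -> R) (J : V -> Prop) :
  symplectic_lie br (omega_shift br w alpha) -> is_linear_form alpha ->
  is_ideal br J -> isotropic (omega_shift br w alpha) J -> isotropic w J.
Proof.
move=> [br_lie _ shift_nd shift_cl] alpha_lin Jideal Jiso x y Jx Jy.
have brxy := isotropic_ideal_abelian br_lie shift_cl shift_nd Jideal Jiso Jx Jy.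
by rewrite -(Jiso x y Jx Jy) /omega_shift dform_commuting ?addr0.
Qed.

End SymplecticShift.

Theorem lemma2p6 (R : realType) (n : nat)
  (br : 'rV[R]_(2 * n) -> 'rV[R]_(2 * n) -> 'rV[R]_(2 * n))
  (w : 'rV[R]_(2 * n) -> 'rV[R]_(2 * n) -> R)
  (alpha : 'rV[R]_(2 * n) -> R) :
  irreducible_symplectic_lie br w ->
  is_linear_form alpha ->
  nondegenerate_form (omega_shift br w alpha) ->
  irreducible_symplectic_lie br (omega_shift br w alpha).
Proof.
move=> [w_sympl w_irr] alpha_lin shift_nd.
have shift_sympl := omega_shift_symplectic w_sympl alpha_lin shift_nd.
split=> // -[J [Jideal Jnz Jiso]]; apply: w_irr; exists J; split=> //.
exact: omega_shift_isotropic_ideal shift_sympl alpha_lin Jideal Jiso.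
Qed.
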